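(* Let $(H,p)$ be a pivotal Hopf monoid in a symmetric monoidal category $\mathcal C$, $\Gamma$ a directed ribbon graph with edge set $E$ and $\alpha\in E$. Then: 1. $(H^{\otimes E},\rhd_{\alpha+},\delta_{\alpha+})$ and $(H^{\otimes E},\rhd_{\alpha-},\delta_{\alpha-})$ are left-left $H$-Hopf modules, i.e. $\delta\circ\rhd=(m\otimes\rhd)\circ(1_H\otimes\tau_{H,H}\otimes1_{H^{\otimes E}})\circ(\Delta\otimes\delta)$ for $(\rhd,\delta)=(\rhd_{\alpha\pm},\delta_{\alpha\pm})$; 2. $\rhd_{\alpha-}\circ(1_H\otimes\rhd_{\alpha+})=\rhd_{\alpha+}\circ(1_H\otimes\rhd_{\alpha-})\circ(\tau_{H,H}\otimes1_{H^{\otimes E}})$ and $(1_H\otimes\delta_{\alpha-})\circ\delta_{\alpha+}=(\tau_{H,H}\otimes1_{H^{\otimes E}})\circ(1_H\otimes\delta_{\alpha+})\circ\delta_{\alpha-}$.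
   Context: $\mathcal C$ symmetric monoidal (unit $e$, symmetry $\tau$); $H$ a Hopf monoid ($m,\eta,\Delta,\epsilon,S$); pivotal: $p:e\to H$ with $\Delta\circ p=p\otimes p$, $\epsilon\circ p=1_e$, $m\circ(m\otimes1)\circ(1\otimes S^2\otimes S)\circ(p\otimes1\otimes p)=1_H$; $T:=m\circ(p\otimes S)$. Sweedler notation is shorthand for composites in $\mathcal C$. A directed ribbon graph is a finite directed graph with edge set $E$ (plus cyclic orderings at vertices). $H^{\otimes E}$ is the tensor product of copies of $H$ indexed by $E$ (the copy of $\alpha$ being its label). For $\alpha\in E$ with label $a$ (other labels unchanged): $\rhd_{\alpha+}:H\otimes H^{\otimes E}\to H^{\otimes E}$, $h\otimes(\dots a\dots)\mapsto(\dots ha\dots)$; $\rhd_{\alpha-}$: $a\mapsto T(hT(a))$; $\delta_{\alpha+}:H^{\otimes E}\to H\otimes H^{\otimes E}$, $(\dots a\dots)\mapsto a_{(1)}\otimes(\dots a_{(2)}\dots)$; $\delta_{\alpha-}$: $(\dots a\dots)\mapsto T(a)_{(1)}\otimes(\dots T(T(a)_{(2)})\dots)$. *)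

Set Implicit Arguments.
Unset Strict Implicit.

Record SymMonCat := {
  Ob : Type;
  Hom : Ob -> Ob -> Type;
  idm : forall A, Hom A A;
  comp : forall A B C, Hom B C -> Hom A B -> Hom A C;
  tens : Ob -> Ob -> Ob;
  tensm : forall A B C D, Hom A B -> Hom C D -> Hom (tens A C) (tens B D);
  unitob : Ob;
  assoc : forall A B C, Hom (tens (tens A B) C) (tens A (tens B C));
  assoc_inv : forall A B C, Hom (tens A (tens B C)) (tens (tens A B) C);
  lu : forall A, Hom (tens unitob A) A;
  lu_inv : forall A, Hom A (tens unitob A);
  ru : forall A, Hom (tens A unitob) A;
  ru_inv : forall A, Hom A (tens A unitob);
  sym : forall A B, Hom (tens A B) (tens B A);
  comp_idl : forall A B (f : Hom A B), comp (idm B) f = f;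
  comp_idr : forall A B (f : Hom A B), comp f (idm A) = f;
  comp_assoc : forall A B C D (f : Hom A B) (g : Hom B C) (h : Hom C D),
      comp h (comp g f) = comp (comp h g) f;
  tens_id : forall A B, tensm (idm A) (idm B) = idm (tens A B);
  tens_comp : forall A B C A' B' C' (f : Hom A B) (g : Hom B C)
      (f' : Hom A' B') (g' : Hom B' C'),
      tensm (comp g f) (comp g' f') = comp (tensm g g') (tensm f f');
  assoc_nat : forall A B C A' B' C' (f : Hom A A') (g : Hom B B') (h : Hom C C'),
      comp (assoc A' B' C') (tensm (tensm f g) h)
      = comp (tensm f (tensm g h)) (assoc A B C);
  assoc_iso1 : forall A B C, comp (assoc_inv A B C) (assoc A B C) = idm _;
  assoc_iso2 : forall A B C, comp (assoc A B C) (assoc_inv A B C) = idm _;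
  lu_nat : forall A B (f : Hom A B),
      comp (lu B) (tensm (idm unitob) f) = comp f (lu A);
  lu_iso1 : forall A, comp (lu_inv A) (lu A) = idm _;
  lu_iso2 : forall A, comp (lu A) (lu_inv A) = idm _;
  ru_nat : forall A B (f : Hom A B),
      comp (ru B) (tensm f (idm unitob)) = comp f (ru A);
  ru_iso1 : forall A, comp (ru_inv A) (ru A) = idm _;
  ru_iso2 : forall A, comp (ru A) (ru_inv A) = idm _;
  sym_nat : forall A B A' B' (f : Hom A A') (g : Hom B B'),
      comp (sym A' B') (tensm f g) = comp (tensm g f) (sym A B);
  sym_inv : forall A B, comp (sym B A) (sym A B) = idm _;
  pentagon : forall A B C D,
      comp (assoc A B (tens C D)) (assoc (tens A B) C D)
      = comp (tensm (idm A) (assoc B C D))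
          (comp (assoc A (tens B C) D) (tensm (assoc A B C) (idm D)));
  triangle : forall A B,
      comp (tensm (idm A) (lu B)) (assoc A unitob B) = tensm (ru A) (idm B);
  hexagon : forall A B C,
      comp (assoc B C A) (comp (sym A (tens B C)) (assoc A B C))
      = comp (tensm (idm B) (sym A C))
          (comp (assoc B A C) (tensm (sym A B) (idm C)))
}.

Arguments idm {s} A.
Arguments comp {s A B C} _ _.
Arguments tens {s} _ _.
Arguments tensm {s A B C D} _ _.
Arguments unitob {s}.
Arguments assoc {s} A B C.
Arguments assoc_inv {s} A B C.
Arguments lu {s} A.
Arguments lu_inv {s} A.
Arguments ru {s} A.
Arguments ru_inv {s} A.
Arguments sym {s} A B.

Section HopfDefs.
Context {C : SymMonCat}.

Notation "g \o f" := (comp g f) (at level 40, left associativity).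
Notation "A * B" := (tens A B).

(* (A⊗B)⊗(C⊗D) -> (A⊗C)⊗(B⊗D), i.e. 1 ⊗ τ_{B,C} ⊗ 1 *)
Definition middle_swap (A B C' D : Ob C) :
    Hom ((A * B) * (C' * D)) ((A * C') * (B * D)) :=
  assoc_inv A C' (B * D)
  \o tensm (idm A) (assoc C' B D \o tensm (sym B C') (idm D) \o assoc_inv B C' D)
  \o assoc A B (C' * D).

Record HopfMonoid (H : Ob C) := {
  mul : Hom (H * H) H;
  unt : Hom unitob H;
  comul : Hom H (H * H);
  counit : Hom H unitob;
  antipode : Hom H H;
  mul_assoc : mul \o tensm mul (idm H) = mul \o tensm (idm H) mul \o assoc H H H;
  mul_unitl : mul \o tensm unt (idm H) = lu H;
  mul_unitr : mul \o tensm (idm H) unt = ru H;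
  comul_coassoc : assoc H H H \o tensm comul (idm H) \o comul
                  = tensm (idm H) comul \o comul;
  comul_counitl : lu H \o tensm counit (idm H) \o comul = idm H;
  comul_counitr : ru H \o tensm (idm H) counit \o comul = idm H;
  bialg_mul : comul \o mul = tensm mul mul \o middle_swap H H H H \o tensm comul comul;
  bialg_counit_mul : counit \o mul = lu unitob \o tensm counit counit;
  bialg_comul_unit : comul \o unt = tensm unt unt \o lu_inv unitob;
  bialg_counit_unit : counit \o unt = idm unitob;
  antipode_l : mul \o tensm antipode (idm H) \o comul = unt \o counit;
  antipode_r : mul \o tensm (idm H) antipode \o comul = unt \o counit
}.

Context {H : Ob C} (hs : HopfMonoid H).

Notation m := (mul hs).
Notation eta := (unt hs).
Notation Dl := (comul hs).
Notation eps := (counit hs).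
Notation Sa := (antipode hs).

Definition is_pivotal (p : Hom unitob H) : Prop :=
  Dl \o p = tensm p p \o lu_inv unitob /\
  eps \o p = idm unitob /\
  m \o tensm m (idm H) \o tensm (tensm (idm H) (Sa \o Sa)) Sa
    \o tensm (tensm p (idm H)) p \o tensm (lu_inv H) (idm unitob) \o ru_inv H
  = idm H.

Definition Tmap (p : Hom unitob H) : Hom H H := m \o tensm p Sa \o lu_inv H.

(* H^{⊗E} for E = {0,...,n-1}: H ⊗ (H ⊗ (... ⊗ e)) *)
Fixpoint Hpow (n : nat) : Ob C :=
  match n with 0 => unitob | S n' => H * Hpow n' end.

(* apply a local action g : H ⊗ H -> H to the k-th tensor factor *)
Fixpoint act_at (g : Hom (H * H) H) (n k : nat) : Hom (H * Hpow n) (Hpow n) :=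
  match n return Hom (H * Hpow n) (Hpow n) with
  | 0 => lu unitob \o tensm eps (idm unitob)   (* junk: k < n excluded *)
  | S n' =>
    match k with
    | 0 => tensm g (idm (Hpow n')) \o assoc_inv H H (Hpow n')
    | S k' => tensm (idm H) (act_at g n' k') \o assoc H H (Hpow n')
              \o tensm (sym H H) (idm (Hpow n')) \o assoc_inv H H (Hpow n')
    end
  end.

(* apply a local coaction g : H -> H ⊗ H to the k-th tensor factor,
   the first output leg being brought to the front *)
Fixpoint coact_at (g : Hom H (H * H)) (n k : nat) : Hom (Hpow n) (H * Hpow n) :=
  match n return Hom (Hpow n) (H * Hpow n) with
  | 0 => tensm eta (idm unitob) \o lu_inv unitob   (* junk: k < n excluded *)
  | S n' =>
    match k with
    | 0 => assoc H H (Hpow n') \o tensm g (idm (Hpow n'))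
    | S k' => assoc H H (Hpow n') \o tensm (sym H H) (idm (Hpow n'))
              \o assoc_inv H H (Hpow n') \o tensm (idm H) (coact_at g n' k')
    end
  end.

(* ▷_{α+}: a ↦ h a ;  ▷_{α-}: a ↦ T(h T(a)) *)
Definition act_plus (n k : nat) := act_at m n k.
Definition act_minus (p : Hom unitob H) (n k : nat) :=
  act_at (Tmap p \o m \o tensm (idm H) (Tmap p)) n k.
(* δ_{α+}: a ↦ a(1) ⊗ a(2) ;  δ_{α-}: a ↦ T(a)(1) ⊗ T(T(a)(2)) *)
Definition coact_plus (n k : nat) := coact_at Dl n k.
Definition coact_minus (p : Hom unitob H) (n k : nat) :=
  coact_at (tensm (idm H) (Tmap p) \o Dl \o Tmap p) n k.

Definition is_hopf_module (M : Ob C) (act : Hom (H * M) M) (coact : Hom M (H * M))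
  : Prop :=
  act \o tensm m (idm M) = act \o tensm (idm H) act \o assoc H H M /\
  act \o tensm eta (idm M) = lu M /\
  tensm Dl (idm M) \o coact = assoc_inv H H M \o tensm (idm H) coact \o coact /\
  tensm eps (idm M) \o coact = lu_inv M /\
  coact \o act = tensm m act \o middle_swap H H H M \o tensm Dl coact.

End HopfDefs.

(* Write T(a) = p S(a). The pivotal identity p S²(a) S(p) = a and the
   anti-multiplicativity of S give T ∘ T = 1 and T(h T(a)) = a S(h); the
   anti-comultiplicativity of S and Δ(p) = p ⊗ p give Δ(T a) = T(a₂) ⊗ T(a₁). S is
   anti-multiplicative by uniqueness of convolution inverses, and anti-comultiplicative by
   the same argument in the opposite category.
   On the edge factor, (▷₋, δ₋) is therefore the regular Hopf module (m, Δ) conjugated by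
   the involution T, hence a Hopf module. Moreover ▷₋ is right multiplication by S(h),
   which commutes with left multiplication by associativity, and dually δ₋ and δ₊ commute
   by coassociativity. On H^{⊗E} the structures at the α-th factor come from those on
   H ⊗ (other factors) by moving that factor to the front with the symmetry, which is
   natural and satisfies the Yang-Baxter equation, so an induction on the position of α
   transfers all identities. *)

From Stdlib Require Import Lia.

Local Notation "g \o f" := (comp g f) (at level 40, left associativity).

Lemma tensr_comp {C : SymMonCat} {A B D : Ob C} (X : Ob C) (f : Hom A B) (g : Hom B D) :
  tensm (idm X) (g \o f) = tensm (idm X) g \o tensm (idm X) f.
Proof. rewrite <- tens_comp, comp_idl. reflexivity. Qed.

(* Equations are mostly stated precomposed with an arbitrary [x], so that they rewrite
   inside the right-nested composites produced by [rassoc]. [tail_rewrite H n L] rewrites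
   with such an equation [L] lifted under [n] layers of [tensm (idm H) _]. *)
Ltac rassoc := repeat rewrite <- comp_assoc; repeat rewrite comp_idl.

Ltac tail_lift H n f :=
  lazymatch n with
  | O => f
  | S ?k => let f' := tail_lift H k f in constr:(tensm (idm H) f')
  end.
Ltac tail_chain H n f x :=
  lazymatch f with
  | comp ?g ?f' => let r := tail_chain H n f' x in let g' := tail_lift H n g in constr:(comp g' r)
  | _ => let f' := tail_lift H n f in constr:(comp f' x)
  end.
Ltac tail_equation H n E h :=
  lazymatch type of E with @eq (@Hom _ ?A ?B) ?l ?r =>
    let l0 := tail_lift H n l in
    let r0 := tail_lift H n r in
    lazymatch type of l0 with @Hom ?K ?A' _ =>
    let W := fresh "W" in let x := fresh "x" in
    assert (h : forall (W : Ob K) (x : Hom W A'),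
       ltac:(let L := tail_chain H n l x in let R := tail_chain H n r x in exact (L = R)));
    [ let E' := fresh in intros W x; assert (E' : l0 = r0) by (rewrite E; reflexivity);
      rewrite ?tensr_comp in E'; rewrite ?comp_assoc in E'; rewrite ?comp_assoc; rewrite E';
      reflexivity
    | ]
    end
  end.
Ltac tail_rewrite_with H n L dir :=
  let E := fresh "E" in let h := fresh "h" in
  pose proof L as E; rewrite ?comp_idr in E; tail_equation H n E h;
  (match dir with true => rewrite h | false => rewrite <- h end);
  clear E h; rewrite ?tens_id, ?comp_idl.
Ltac tail_rewrite H n L := tail_rewrite_with H n L true.
Ltac tail_rewrite_r H n L := tail_rewrite_with H n L false.

Section Coherence.
Context {C : SymMonCat}.
Local Notation I := (@unitob C).

Lemma eq_at_idm {X Y : Ob C} (f g : Hom X Y) : f \o idm X = g \o idm X -> f = g.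
Proof. rewrite !comp_idr. auto. Qed.

Lemma split_epi_cancel {X Y Z : Ob C} (f g : Hom Y Z) (q : Hom X Y) (qi : Hom Y X) :
  q \o qi = idm _ -> f \o q = g \o q -> f = g.
Proof.
  intros E fg. rewrite <- (comp_idr f), <- (comp_idr g), <- E, !comp_assoc, fg. reflexivity.
Qed.
Lemma split_mono_cancel {X Y Z : Ob C} (f g : Hom X Y) (q : Hom Y Z) (qi : Hom Z Y) :
  qi \o q = idm _ -> q \o f = q \o g -> f = g.
Proof.
  intros E fg. rewrite <- (comp_idl f), <- (comp_idl g), <- E, <- !comp_assoc, fg. reflexivity.
Qed.

Lemma tensl_comp {A B D : Ob C} (X : Ob C) (f : Hom A B) (g : Hom B D) :
  tensm (g \o f) (idm X) = tensm g (idm X) \o tensm f (idm X).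
Proof. rewrite <- tens_comp, comp_idl. reflexivity. Qed.
Lemma tens_split {A B A' B' : Ob C} (f : Hom A B) (g : Hom A' B') :
  tensm f g = tensm f (idm _) \o tensm (idm _) g.
Proof. rewrite <- tens_comp, comp_idl, comp_idr. reflexivity. Qed.

Lemma tens_fuse {A B D A' B' D' W : Ob C} (f : Hom A B) (g : Hom B D)
    (f' : Hom A' B') (g' : Hom B' D') (x : Hom W _) :
  tensm g g' \o (tensm f f' \o x) = tensm (g \o f) (g' \o f') \o x.
Proof. rewrite tens_comp, comp_assoc. reflexivity. Qed.
Lemma tensl_fuse {A B D X W : Ob C} (f : Hom A B) (g : Hom B D) (x : Hom W _) :
  tensm g (idm X) \o (tensm f (idm X) \o x) = tensm (g \o f) (idm X) \o x.
Proof. rewrite tens_fuse, comp_idl. reflexivity. Qed.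
Lemma tensr_fuse {A B D X W : Ob C} (f : Hom A B) (g : Hom B D) (x : Hom W _) :
  tensm (idm X) g \o (tensm (idm X) f \o x) = tensm (idm X) (g \o f) \o x.
Proof. rewrite tens_fuse, comp_idl. reflexivity. Qed.
Lemma tens_merge {A B A' B' W : Ob C} (g : Hom A B) (f : Hom A' B') (x : Hom W _) :
  tensm g (idm _) \o (tensm (idm _) f \o x) = tensm g f \o x.
Proof. rewrite tens_fuse, comp_idl, comp_idr. reflexivity. Qed.
Lemma tens_interchange {A B A' B' W : Ob C} (f : Hom A B) (g : Hom A' B') (x : Hom W _) :
  tensm f (idm _) \o (tensm (idm _) g \o x) = tensm (idm _) g \o (tensm f (idm _) \o x).
Proof. rewrite !tens_fuse, !comp_idl, !comp_idr. reflexivity. Qed.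

Lemma tensl_cancel {A B E W : Ob C} {f : Hom A B} {g : Hom B A} (fg : f \o g = idm B)
    (x : Hom W (tens B E)) :
  tensm f (idm E) \o (tensm g (idm E) \o x) = x.
Proof. rewrite tensl_fuse, fg, tens_id, comp_idl. reflexivity. Qed.
Lemma tensr_cancel {A B E W : Ob C} {f : Hom A B} {g : Hom B A} (fg : f \o g = idm B)
    (x : Hom W (tens E B)) :
  tensm (idm E) f \o (tensm (idm E) g \o x) = x.
Proof. rewrite tensr_fuse, fg, tens_id, comp_idl. reflexivity. Qed.

Lemma assocK {A B D W : Ob C} (x : Hom W _) : assoc_inv A B D \o (assoc A B D \o x) = x.
Proof. rewrite comp_assoc, assoc_iso1, comp_idl. reflexivity. Qed.
Lemma assoc_invK {A B D W : Ob C} (x : Hom W _) : assoc A B D \o (assoc_inv A B D \o x) = x.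
Proof. rewrite comp_assoc, assoc_iso2, comp_idl. reflexivity. Qed.
Lemma luK {A W : Ob C} (x : Hom W _) : lu_inv A \o (lu A \o x) = x.
Proof. rewrite comp_assoc, lu_iso1, comp_idl. reflexivity. Qed.
Lemma lu_invK {A W : Ob C} (x : Hom W _) : lu A \o (lu_inv A \o x) = x.
Proof. rewrite comp_assoc, lu_iso2, comp_idl. reflexivity. Qed.
Lemma ruK {A W : Ob C} (x : Hom W _) : ru_inv A \o (ru A \o x) = x.
Proof. rewrite comp_assoc, ru_iso1, comp_idl. reflexivity. Qed.
Lemma ru_invK {A W : Ob C} (x : Hom W _) : ru A \o (ru_inv A \o x) = x.
Proof. rewrite comp_assoc, ru_iso2, comp_idl. reflexivity. Qed.
Lemma symK {A B W : Ob C} (x : Hom W _) : sym B A \o (sym A B \o x) = x.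
Proof. rewrite comp_assoc, sym_inv, comp_idl. reflexivity. Qed.

Lemma assoc_natx {A B D A' B' D' W : Ob C} (f : Hom A A') (g : Hom B B') (h : Hom D D')
    (x : Hom W _) :
  assoc A' B' D' \o (tensm (tensm f g) h \o x) = tensm f (tensm g h) \o (assoc A B D \o x).
Proof. rewrite !comp_assoc, assoc_nat. reflexivity. Qed.
Lemma assoc_inv_natx {A B D A' B' D' W : Ob C} (f : Hom A A') (g : Hom B B') (h : Hom D D')
    (x : Hom W _) :
  assoc_inv A' B' D' \o (tensm f (tensm g h) \o x) = tensm (tensm f g) h \o (assoc_inv A B D \o x).
Proof. rewrite <- (assocK (tensm (tensm f g) h \o _)), assoc_natx, assoc_invK. reflexivity. Qed.
Lemma lu_natx {A B W : Ob C} (f : Hom A B) (x : Hom W _) :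
  lu B \o (tensm (idm _) f \o x) = f \o (lu A \o x).
Proof. rewrite !comp_assoc, lu_nat. reflexivity. Qed.
Lemma lu_inv_natx {A B W : Ob C} (f : Hom A B) (x : Hom W _) :
  lu_inv B \o (f \o x) = tensm (idm _) f \o (lu_inv A \o x).
Proof. rewrite <- (luK (tensm (idm _) f \o _)), lu_natx, lu_invK. reflexivity. Qed.
Lemma ru_natx {A B W : Ob C} (f : Hom A B) (x : Hom W _) :
  ru B \o (tensm f (idm _) \o x) = f \o (ru A \o x).
Proof. rewrite !comp_assoc, ru_nat. reflexivity. Qed.
Lemma ru_inv_natx {A B W : Ob C} (f : Hom A B) (x : Hom W _) :
  ru_inv B \o (f \o x) = tensm f (idm _) \o (ru_inv A \o x).
Proof. rewrite <- (ruK (tensm f (idm _) \o _)), ru_natx, ru_invK. reflexivity. Qed.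
Lemma sym_natx {A B A' B' W : Ob C} (f : Hom A A') (g : Hom B B') (x : Hom W _) :
  sym A' B' \o (tensm f g \o x) = tensm g f \o (sym A B \o x).
Proof. rewrite !comp_assoc, sym_nat. reflexivity. Qed.

Lemma tens_unitl_inj {A B : Ob C} (f g : Hom A B) : tensm (idm I) f = tensm (idm I) g -> f = g.
Proof.
  intro E. rewrite <- (comp_idr f), <- (comp_idr g), <- (lu_iso2 A).
  rewrite !comp_assoc, <- !lu_nat, E. reflexivity.
Qed.
Lemma tens_unitr_inj {A B : Ob C} (f g : Hom A B) : tensm f (idm I) = tensm g (idm I) -> f = g.
Proof.
  intro E. rewrite <- (comp_idr f), <- (comp_idr g), <- (ru_iso2 A).
  rewrite !comp_assoc, <- !ru_nat, E. reflexivity.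
Qed.

Lemma pentagonx {A B D E W : Ob C} (x : Hom W _) :
  assoc A B (tens D E) \o (assoc (tens A B) D E \o x)
  = tensm (idm A) (assoc B D E) \o (assoc A (tens B D) E \o (tensm (assoc A B D) (idm E) \o x)).
Proof. rewrite comp_assoc, pentagon. rassoc. reflexivity. Qed.
Lemma trianglex {A B W : Ob C} (x : Hom W _) :
  tensm (idm A) (lu B) \o (assoc A I B \o x) = tensm (ru A) (idm B) \o x.
Proof. rewrite comp_assoc, triangle. reflexivity. Qed.
Lemma hexagonx {A B D W : Ob C} (x : Hom W _) :
  assoc B D A \o (sym A (tens B D) \o (assoc A B D \o x))
  = tensm (idm B) (sym A D) \o (assoc B A D \o (tensm (sym A B) (idm D) \o x)).
Proof. rewrite !comp_assoc, <- (comp_assoc _ (sym _ _)), hexagon. rassoc. reflexivity. Qed.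

Lemma lu_tens (A B : Ob C) : lu (tens A B) \o assoc I A B = tensm (lu A) (idm B).
Proof.
  apply tens_unitl_inj.
  apply (split_epi_cancel _ _ (assoc I (tens I A) B \o tensm (assoc I I A) (idm B))
            (tensm (assoc_inv I I A) (idm B) \o assoc_inv I (tens I A) B)).
  { rassoc. rewrite (tensl_cancel (assoc_iso2 _ _ _)), assoc_iso2. reflexivity. }
  apply eq_at_idm. rassoc. rewrite tensr_comp. rassoc. rewrite <- pentagonx.
  rewrite trianglex, <- (tens_id A B), <- assoc_natx, <- triangle, tensl_comp.
  rassoc. rewrite assoc_natx. reflexivity.
Qed.
Lemma lu_tensx {A B W : Ob C} (x : Hom W _) :
  lu (tens A B) \o (assoc I A B \o x) = tensm (lu A) (idm B) \o x.
Proof. rewrite comp_assoc, lu_tens. reflexivity. Qed.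

Lemma lu_sym (A : Ob C) : lu A \o sym A I = ru A.
Proof.
  apply tens_unitr_inj, (split_mono_cancel _ _ (sym A I) (sym I A) (sym_inv _ _)).
  apply eq_at_idm. rassoc. rewrite tensl_comp. rassoc.
  rewrite <- lu_tens. rassoc. rewrite <- lu_natx, <- hexagonx, lu_tensx, <- sym_natx, trianglex.
  reflexivity.
Qed.

Lemma assoc_assoc_tensl_inv {A B D E W : Ob C} (x : Hom W _) :
  assoc A B (tens D E) \o (assoc (tens A B) D E \o (tensm (assoc_inv A B D) (idm E) \o x))
  = tensm (idm A) (assoc B D E) \o (assoc A (tens B D) E \o x).
Proof. rewrite pentagonx, (tensl_cancel (assoc_iso2 _ _ _)). reflexivity. Qed.
Lemma assoc_tensl_assoc {A B D E W : Ob C} (x : Hom W _) :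
  assoc A (tens B D) E \o (tensm (assoc A B D) (idm E) \o x)
  = tensm (idm A) (assoc_inv B D E) \o (assoc A B (tens D E) \o (assoc (tens A B) D E \o x)).
Proof. rewrite pentagonx, (tensr_cancel (assoc_iso1 _ _ _)). reflexivity. Qed.

Definition braid (X Y M : Ob C) : Hom (tens X (tens Y M)) (tens Y (tens X M)) :=
  assoc Y X M \o (tensm (sym X Y) (idm M) \o assoc_inv X Y M).

Lemma braidK {X Y M W : Ob C} (x : Hom W _) : braid Y X M \o (braid X Y M \o x) = x.
Proof.
  unfold braid. rassoc. rewrite assocK, (tensl_cancel (sym_inv _ _)), assoc_invK. reflexivity.
Qed.
Lemma braid_inv {X Y M : Ob C} : braid Y X M \o braid X Y M = idm _.
Proof. rewrite <- (comp_idr (braid X Y M)), braidK. reflexivity. Qed.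

Ltac cancel_isos := repeat first
  [ rewrite assocK | rewrite assoc_invK | rewrite luK | rewrite lu_invK
  | rewrite ruK | rewrite ru_invK | rewrite symK | rewrite braidK
  | rewrite (tensl_cancel (assoc_iso1 _ _ _)) | rewrite (tensl_cancel (assoc_iso2 _ _ _))
  | rewrite (tensr_cancel (assoc_iso1 _ _ _)) | rewrite (tensr_cancel (assoc_iso2 _ _ _))
  | rewrite (tensl_cancel (lu_iso1 _)) | rewrite (tensl_cancel (lu_iso2 _))
  | rewrite (tensr_cancel (lu_iso1 _)) | rewrite (tensr_cancel (lu_iso2 _))
  | rewrite (tensl_cancel (ru_iso1 _)) | rewrite (tensl_cancel (ru_iso2 _))
  | rewrite (tensl_cancel (sym_inv _ _)) | rewrite (tensr_cancel (sym_inv _ _))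
  | rewrite (tensr_cancel braid_inv) ].

Lemma assoc_tensl_inv_assoc_inv {A B D E W : Ob C} (x : Hom W _) :
  assoc (tens A B) D E \o (tensm (assoc_inv A B D) (idm E) \o (assoc_inv A (tens B D) E \o x))
  = assoc_inv A B (tens D E) \o (tensm (idm A) (assoc B D E) \o x).
Proof.
  rewrite <- (assocK (A:=A) (B:=B) (D:=tens D E) (assoc (tens A B) D E \o _)).
  rewrite assoc_assoc_tensl_inv. cancel_isos. reflexivity.
Qed.
Lemma assoc_inv_tensr_assoc_assoc {A B D E W : Ob C} (x : Hom W _) :
  assoc_inv A B (tens D E) \o (tensm (idm A) (assoc B D E) \o (assoc A (tens B D) E \o x))
  = assoc (tens A B) D E \o (tensm (assoc_inv A B D) (idm E) \o x).
Proof. rewrite <- assoc_assoc_tensl_inv. cancel_isos. reflexivity. Qed.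
Lemma tensl_assoc_assoc_inv_assoc_inv {A B D E W : Ob C} (x : Hom W _) :
  tensm (assoc A B D) (idm E) \o (assoc_inv (tens A B) D E \o (assoc_inv A B (tens D E) \o x))
  = assoc_inv A (tens B D) E \o (tensm (idm A) (assoc_inv B D E) \o x).
Proof.
  apply (split_mono_cancel _ _ (assoc A (tens B D) E) (assoc_inv A (tens B D) E)
    (assoc_iso1 _ _ _)).
  rewrite assoc_tensl_assoc. cancel_isos. reflexivity.
Qed.

Lemma triangle_invx {A B W : Ob C} (x : Hom W _) :
  assoc_inv A I B \o (tensm (idm A) (lu_inv B) \o x) = tensm (ru_inv A) (idm B) \o x.
Proof.
  apply (split_mono_cancel _ _ (tensm (ru A) (idm B)) (tensm (ru_inv A) (idm B))).
  { rewrite <- tens_comp, ru_iso1, comp_idl, tens_id. reflexivity. }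
  rewrite <- triangle at 1. rassoc. cancel_isos. reflexivity.
Qed.
Lemma tensl_lu_assoc_inv {A B W : Ob C} (x : Hom W _) :
  tensm (lu A) (idm B) \o (assoc_inv I A B \o x) = lu (tens A B) \o x.
Proof. rewrite <- lu_tens. rassoc. cancel_isos. reflexivity. Qed.
Lemma assoc_tensl_lu_inv {A B W : Ob C} (x : Hom W _) :
  assoc I A B \o (tensm (lu_inv A) (idm B) \o x) = lu_inv (tens A B) \o x.
Proof.
  apply (split_mono_cancel _ _ (lu (tens A B)) (lu_inv (tens A B)) (lu_iso1 _)).
  rewrite lu_tensx. cancel_isos. reflexivity.
Qed.
Lemma assoc_inv_lu_inv {A B W : Ob C} (x : Hom W _) :
  assoc_inv I A B \o (lu_inv (tens A B) \o x) = tensm (lu_inv A) (idm B) \o x.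
Proof. rewrite <- assoc_tensl_lu_inv. cancel_isos. reflexivity. Qed.

Lemma sym_ru_inv (A : Ob C) : sym A I \o ru_inv A = lu_inv A.
Proof.
  apply (split_mono_cancel _ _ (lu A) (lu_inv A) (lu_iso1 _)).
  rewrite comp_assoc, lu_sym, ru_iso2, lu_iso2. reflexivity.
Qed.

Lemma sym_tens_r (X Y Z : Ob C) :
  sym X (tens Y Z) = assoc_inv Y Z X \o (tensm (idm Y) (sym X Z) \o (assoc Y X Z \o
     (tensm (sym X Y) (idm Z) \o assoc_inv X Y Z))).
Proof.
  apply eq_at_idm. rassoc.
  rewrite <- (assocK (A:=Y) (B:=Z) (D:=X) (sym X _ \o _)).
  rewrite <- (assoc_invK (A:=X) (B:=Y) (D:=Z) (idm _)) at 1.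
  rewrite hexagonx. reflexivity.
Qed.

Lemma braid_natx {X Y M X' Y' M' W : Ob C} (f : Hom X X') (g : Hom Y Y') (h : Hom M M')
    (x : Hom W _) :
  braid X' Y' M' \o (tensm f (tensm g h) \o x) = tensm g (tensm f h) \o (braid X Y M \o x).
Proof.
  unfold braid. rassoc. rewrite assoc_inv_natx, tens_fuse, comp_idl, sym_nat.
  rewrite <- (comp_idr h), <- tens_fuse, comp_idr, assoc_natx. reflexivity.
Qed.

Lemma braid_tens_r {X Y Z M W : Ob C} (x : Hom W _) :
  assoc Y Z (tens X M) \o (braid X (tens Y Z) M \o x)
  = tensm (idm Y) (braid X Z M) \o (braid X Y (tens Z M) \o (tensm (idm X) (assoc Y Z M) \o x)).
Proof.
  unfold braid. rewrite (sym_tens_r X Y Z), !tensl_comp, !tensr_comp. rassoc.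
  rewrite assoc_assoc_tensl_inv, assoc_natx, assoc_tensl_assoc, assoc_natx.
  rewrite assoc_tensl_inv_assoc_inv, tens_id. reflexivity.
Qed.

Lemma braid_tens_l {X Y A M W : Ob C} (x : Hom W _) :
  braid (tens X Y) A M \o (assoc_inv X Y (tens A M) \o x)
  = tensm (idm A) (assoc_inv X Y M) \o (braid X A (tens Y M) \o (tensm (idm X) (braid Y A M) \o x)).
Proof.
  enough (E : braid (tens X Y) A M \o assoc_inv X Y (tens A M)
    = tensm (idm A) (assoc_inv X Y M) \o (braid X A (tens Y M) \o tensm (idm X) (braid Y A M))).
  { rewrite comp_assoc, E. rassoc. reflexivity. }
  apply (split_epi_cancel _ _ (assoc X Y (tens A M) \o braid A (tens X Y) M)
      (braid (tens X Y) A M \o assoc_inv X Y (tens A M))).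
  { apply eq_at_idm. rassoc. cancel_isos. reflexivity. }
  apply eq_at_idm. rassoc. cancel_isos. rewrite braid_tens_r. cancel_isos. reflexivity.
Qed.

Lemma braid_yang_baxter {X Y Z M W : Ob C} (x : Hom W _) :
  tensm (idm Z) (braid X Y M) \o (braid X Z (tens Y M) \o (tensm (idm X) (braid Y Z M) \o x))
  = braid Y Z (tens X M) \o (tensm (idm Y) (braid X Z M) \o (braid X Y (tens Z M) \o x)).
Proof.
  assert (L : forall X Y A M W (x : Hom W _),
    braid X A (tens Y M) \o (tensm (idm X) (braid Y A M) \o x)
    = tensm (idm A) (assoc X Y M) \o (braid (tens X Y) A M \o (assoc_inv X Y (tens A M) \o x))).
  { intros. rewrite braid_tens_l. cancel_isos. reflexivity. }
  rewrite !L.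
  change (braid X Y M) with (assoc Y X M \o (tensm (sym X Y) (idm M) \o assoc_inv X Y M)).
  change (braid X Y (tens Z M))
    with (assoc Y X (tens Z M) \o (tensm (sym X Y) (idm _) \o assoc_inv X Y (tens Z M))).
  rassoc. rewrite !tensr_comp. rassoc. cancel_isos.
  rewrite <- braid_natx, tens_id. cancel_isos. rewrite <- (tens_id Z M). reflexivity.
Qed.

Lemma braid_unit_lu_inv {X M W : Ob C} (x : Hom W _) :
  braid X I M \o (tensm (idm X) (lu_inv M) \o x) = lu_inv (tens X M) \o x.
Proof.
  unfold braid. rassoc. rewrite triangle_invx, tensl_fuse, sym_ru_inv, assoc_tensl_lu_inv.
  reflexivity.
Qed.
Lemma lu_braid_unit {X M W : Ob C} (x : Hom W _) :
  lu (tens X M) \o (braid X I M \o x) = tensm (idm X) (lu M) \o x.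
Proof.
  rewrite <- (tensr_cancel (lu_iso1 M) (E:=X) x) at 1.
  rewrite braid_unit_lu_inv. cancel_isos. reflexivity.
Qed.

Lemma middle_swap_braid (A B D X : Ob C) :
  middle_swap A B D X
  = assoc_inv A D (tens B X) \o (tensm (idm A) (braid B D X) \o assoc A B (tens D X)).
Proof. unfold middle_swap, braid. rewrite !comp_assoc. reflexivity. Qed.

Lemma braid_assoc_tail {B D E M : Ob C} :
  tensm (idm D) (assoc B E M) \o (assoc D (tens B E) M \o tensm (braid B D E) (idm M))
  = braid B D (tens E M) \o (tensm (idm B) (assoc D E M) \o assoc B (tens D E) M).
Proof.
  apply eq_at_idm. unfold braid. rewrite !tensl_comp. rassoc.
  rewrite <- pentagonx, assoc_natx, tens_id, assoc_inv_tensr_assoc_assoc. reflexivity.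
Qed.

Lemma assoc_middle_swap {A B D E M W : Ob C} (x : Hom W _) :
  assoc (tens A D) (tens B E) M \o (tensm (middle_swap A B D E) (idm M) \o x)
  = tensm (idm (tens A D)) (assoc_inv B E M) \o (middle_swap A B D (tens E M)
      \o (tensm (idm (tens A B)) (assoc D E M) \o (assoc (tens A B) (tens D E) M \o x))).
Proof.
  enough (CMS : tensm (idm (tens A D)) (assoc B E M) \o (assoc (tens A D) (tens B E) M
      \o (tensm (middle_swap A B D E) (idm M) \o x))
    = middle_swap A B D (tens E M) \o (tensm (idm (tens A B)) (assoc D E M)
      \o (assoc (tens A B) (tens D E) M \o x))).
  { rewrite <- CMS. cancel_isos. reflexivity. }
  rewrite !middle_swap_braid, !tensl_comp. rassoc.
  rewrite <- (tens_id A B), assoc_natx, pentagonx.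
  rewrite <- (assoc_inv_tensr_assoc_assoc (A:=A) (B:=D) (D:=tens B E) (E:=M)).
  rewrite <- (tens_id A D), <- assoc_inv_natx, assoc_natx.
  rewrite (tensr_fuse (tensm (braid B D E) (idm M))), tensr_fuse, braid_assoc_tail.
  rewrite !tensr_comp. rassoc. reflexivity.
Qed.

Lemma assoc_inv_nat {A B D A' B' D' : Ob C} (f : Hom A A') (g : Hom B B') (h : Hom D D') :
  assoc_inv A' B' D' \o tensm f (tensm g h) = tensm (tensm f g) h \o assoc_inv A B D.
Proof. apply eq_at_idm. rassoc. apply assoc_inv_natx. Qed.
Lemma lu_inv_nat {A B : Ob C} (f : Hom A B) : lu_inv B \o f = tensm (idm _) f \o lu_inv A.
Proof. apply eq_at_idm. rassoc. apply lu_inv_natx. Qed.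
Lemma ru_inv_nat {A B : Ob C} (f : Hom A B) : ru_inv B \o f = tensm f (idm _) \o ru_inv A.
Proof. apply eq_at_idm. rassoc. apply ru_inv_natx. Qed.
Lemma pentagon_inv (A B D E : Ob C) :
  assoc_inv (tens A B) D E \o assoc_inv A B (tens D E)
  = tensm (assoc_inv A B D) (idm E) \o assoc_inv A (tens B D) E \o tensm (idm A) (assoc_inv B D E).
Proof.
  apply eq_at_idm. rassoc. rewrite <- tensl_assoc_assoc_inv_assoc_inv. cancel_isos. reflexivity.
Qed.
Lemma triangle_inv (A B : Ob C) :
  assoc_inv A I B \o tensm (idm A) (lu_inv B) = tensm (ru_inv A) (idm B).
Proof. apply eq_at_idm. rassoc. apply triangle_invx. Qed.
Lemma hexagon_inv (A B D : Ob C) :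
  assoc_inv A B D \o sym (tens B D) A \o assoc_inv B D A
  = tensm (sym B A) (idm D) \o assoc_inv B A D \o tensm (idm B) (sym D A).
Proof.
  apply (split_epi_cancel _ _ (assoc B D A \o (sym A (tens B D) \o assoc A B D))
                  (assoc_inv A B D \o (sym (tens B D) A \o assoc_inv B D A))).
  { apply eq_at_idm. rassoc. cancel_isos. reflexivity. }
  apply eq_at_idm. rassoc. cancel_isos. rewrite hexagonx. cancel_isos. reflexivity.
Qed.

Section Tail.
Context {H : Ob C}.
Local Notation "⟪ f ⟫" := (tensm (idm H) f).

Definition mul_head (g : Hom (tens H H) H) (M : Ob C) : Hom (tens H (tens H M)) (tens H M) :=
  tensm g (idm M) \o assoc_inv H H M.
Definition comul_head (c : Hom H (tens H H)) (M : Ob C) : Hom (tens H M) (tens H (tens H M)) :=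
  assoc H H M \o tensm c (idm M).
Definition map_head (f : Hom H H) (M : Ob C) : Hom (tens H M) (tens H M) := tensm f (idm M).
Definition ins_head (q : Hom I H) (M : Ob C) : Hom M (tens H M) := tensm q (idm M) \o lu_inv M.
Definition del_head (e : Hom H I) (M : Ob C) : Hom (tens H M) M := lu M \o tensm e (idm M).
Definition swap_head (M : Ob C) : Hom (tens H (tens H M)) (tens H (tens H M)) := braid H H M.

Lemma mul_head_natx g {M M' W : Ob C} (f : Hom M M') (x : Hom W _) :
  mul_head g M' \o (⟪⟪f⟫⟫ \o x) = ⟪f⟫ \o (mul_head g M \o x).
Proof. unfold mul_head. rassoc. rewrite assoc_inv_natx, tens_id, tens_interchange. reflexivity. Qed.
Lemma comul_head_natx c {M M' W : Ob C} (f : Hom M M') (x : Hom W _) :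
  comul_head c M' \o (⟪f⟫ \o x) = ⟪⟪f⟫⟫ \o (comul_head c M \o x).
Proof.
  unfold comul_head. rassoc. rewrite tens_interchange, <- (tens_id H H), assoc_natx. reflexivity.
Qed.
Lemma map_head_natx s {M M' W : Ob C} (f : Hom M M') (x : Hom W _) :
  map_head s M' \o (⟪f⟫ \o x) = ⟪f⟫ \o (map_head s M \o x).
Proof. apply tens_interchange. Qed.
Lemma ins_head_natx q {M M' W : Ob C} (f : Hom M M') (x : Hom W _) :
  ins_head q M' \o (f \o x) = ⟪f⟫ \o (ins_head q M \o x).
Proof. unfold ins_head. rassoc. rewrite lu_inv_natx, <- (tens_interchange q f). reflexivity. Qed.
Lemma del_head_natx e {M M' W : Ob C} (f : Hom M M') (x : Hom W _) :
  del_head e M' \o (⟪f⟫ \o x) = f \o (del_head e M \o x).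
Proof. unfold del_head. rassoc. rewrite tens_interchange, lu_natx. reflexivity. Qed.
Lemma swap_head_natx {M M' W : Ob C} (f : Hom M M') (x : Hom W _) :
  swap_head M' \o (⟪⟪f⟫⟫ \o x) = ⟪⟪f⟫⟫ \o (swap_head M \o x).
Proof. apply braid_natx. Qed.

Lemma swap_headK {M W : Ob C} (x : Hom W _) : swap_head M \o (swap_head M \o x) = x.
Proof. apply braidK. Qed.
Lemma tensr_swap_headK {M W : Ob C} (x : Hom W _) :
  ⟪swap_head M⟫ \o (⟪swap_head M⟫ \o x) = x.
Proof. apply (tensr_cancel braid_inv). Qed.

Lemma swap_map_first s {M W : Ob C} (x : Hom W _) :
  swap_head M \o (map_head s (tens H M) \o x) = ⟪map_head s M⟫ \o (swap_head M \o x).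
Proof. unfold swap_head, map_head. rewrite <- (tens_id H M), braid_natx. reflexivity. Qed.
Lemma swap_map_second s {M W : Ob C} (x : Hom W _) :
  swap_head M \o (⟪map_head s M⟫ \o x) = map_head s (tens H M) \o (swap_head M \o x).
Proof. unfold swap_head, map_head. rewrite braid_natx, tens_id. reflexivity. Qed.

Lemma swap_mul_head g {M W : Ob C} (x : Hom W _) :
  swap_head M \o (mul_head g (tens H M) \o x)
  = ⟪mul_head g M⟫ \o (swap_head (tens H M) \o (⟪swap_head M⟫ \o x)).
Proof.
  unfold swap_head, mul_head. rassoc.
  rewrite <- (tens_id H M), braid_natx, braid_tens_l, tensr_comp. rassoc. reflexivity.
Qed.
Lemma swap_mul_tail g {M W : Ob C} (x : Hom W _) :
  swap_head M \o (⟪mul_head g M⟫ \o x)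
  = mul_head g (tens H M) \o (⟪swap_head M⟫ \o (swap_head (tens H M) \o x)).
Proof.
  rewrite <- (swap_headK (M:=M) (mul_head g _ \o _)), swap_mul_head.
  rewrite tensr_swap_headK, swap_headK. reflexivity.
Qed.
Lemma comul_head_swap c {M W : Ob C} (x : Hom W _) :
  comul_head c (tens H M) \o (swap_head M \o x)
  = ⟪swap_head M⟫ \o (swap_head (tens H M) \o (⟪comul_head c M⟫ \o x)).
Proof.
  unfold swap_head, comul_head. rassoc.
  rewrite <- (tens_id H M) at 1. rewrite <- braid_natx, braid_tens_r, tensr_comp. rassoc.
  reflexivity.
Qed.
Lemma comul_tail_swap c {M W : Ob C} (x : Hom W _) :
  ⟪comul_head c M⟫ \o (swap_head M \o x)
  = swap_head (tens H M) \o (⟪swap_head M⟫ \o (comul_head c (tens H M) \o x)).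
Proof.
  rewrite <- (swap_headK (M:=M) x) at 2. rewrite comul_head_swap.
  rewrite tensr_swap_headK, swap_headK. reflexivity.
Qed.
Lemma swap_comul_tail c {M W : Ob C} (x : Hom W _) :
  swap_head (tens H M) \o (⟪comul_head c M⟫ \o x)
  = ⟪swap_head M⟫ \o (comul_head c (tens H M) \o (swap_head M \o x)).
Proof. rewrite comul_head_swap, tensr_swap_headK. reflexivity. Qed.

Lemma swap_ins_tail q {M W : Ob C} (x : Hom W _) :
  swap_head M \o (⟪ins_head q M⟫ \o x) = ins_head q (tens H M) \o x.
Proof.
  unfold swap_head, ins_head. rewrite tensr_comp. rassoc.
  rewrite braid_natx, braid_unit_lu_inv, tens_id. reflexivity.
Qed.
Lemma swap_ins_head q {M W : Ob C} (x : Hom W _) :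
  swap_head M \o (ins_head q (tens H M) \o x) = ⟪ins_head q M⟫ \o x.
Proof. rewrite <- swap_ins_tail. apply swap_headK. Qed.
Lemma del_head_swap e {M W : Ob C} (x : Hom W _) :
  del_head e (tens H M) \o (swap_head M \o x) = ⟪del_head e M⟫ \o x.
Proof.
  unfold swap_head, del_head. rewrite tensr_comp. rassoc.
  rewrite <- (tens_id H M), <- braid_natx, lu_braid_unit. reflexivity.
Qed.
Lemma del_tail_swap e {M W : Ob C} (x : Hom W _) :
  ⟪del_head e M⟫ \o (swap_head M \o x) = del_head e (tens H M) \o x.
Proof. rewrite <- del_head_swap, swap_headK. reflexivity. Qed.

Lemma swap_head_yang_baxter {M W : Ob C} (x : Hom W _) :
  ⟪swap_head M⟫ \o (swap_head (tens H M) \o (⟪swap_head M⟫ \o x))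
  = swap_head (tens H M) \o (⟪swap_head M⟫ \o (swap_head (tens H M) \o x)).
Proof. apply braid_yang_baxter. Qed.

Lemma mul_head_conj (f g' : Hom H H) g (M : Ob C) :
  mul_head (f \o g \o tensm (idm H) g') M = map_head f M \o (mul_head g M \o ⟪map_head g' M⟫).
Proof.
  unfold map_head, mul_head. apply eq_at_idm. rassoc. rewrite !tensl_comp. rassoc.
  rewrite assoc_inv_natx. reflexivity.
Qed.
Lemma comul_head_conj (f f' : Hom H H) c (M : Ob C) :
  comul_head (tensm (idm H) f \o c \o f') M
  = ⟪map_head f M⟫ \o (comul_head c M \o map_head f' M).
Proof.
  unfold map_head, comul_head. apply eq_at_idm. rassoc. rewrite !tensl_comp. rassoc.
  rewrite <- (tens_id H M), assoc_natx. reflexivity.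
Qed.

Section Hopf.
Context (hs : HopfMonoid H).
Local Notation m := (mul hs).
Local Notation η := (unt hs).
Local Notation Δ := (comul hs).
Local Notation ε := (counit hs).
Local Notation S := (antipode hs).

Lemma mul_assoc_inv : m \o (tensm m (idm H) \o assoc_inv H H H) = m \o tensm (idm H) m.
Proof. rewrite comp_assoc, mul_assoc. apply eq_at_idm. rassoc. cancel_isos. reflexivity. Qed.
Lemma comul_coassoc_inv : tensm Δ (idm H) \o Δ = assoc_inv H H H \o (tensm (idm H) Δ \o Δ).
Proof.
  apply (split_mono_cancel _ _ (assoc H H H) (assoc_inv H H H) (assoc_iso1 _ _ _)).
  rewrite comp_assoc, comul_coassoc. apply eq_at_idm. rassoc. cancel_isos. reflexivity.
Qed.
Lemma comul_counitl_inv : tensm ε (idm H) \o Δ = lu_inv H.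
Proof.
  apply (split_mono_cancel _ _ (lu H) (lu_inv H) (lu_iso1 _)).
  rewrite comp_assoc, comul_counitl, lu_iso2. reflexivity.
Qed.
Lemma comul_counitr_inv : tensm (idm H) ε \o Δ = ru_inv H.
Proof.
  apply (split_mono_cancel _ _ (ru H) (ru_inv H) (ru_iso1 _)).
  rewrite comp_assoc, comul_counitr, ru_iso2. reflexivity.
Qed.

Lemma mul_head_assoc {M W : Ob C} (x : Hom W _) :
  mul_head m M \o (⟪mul_head m M⟫ \o x) = mul_head m M \o (mul_head m (tens H M) \o x).
Proof.
  unfold mul_head. rewrite tensr_comp. rassoc. rewrite assoc_inv_natx.
  rewrite <- (tens_id H M), (assoc_inv_natx m), (tensl_fuse (tensm m (idm H))).
  rewrite mul_assoc, !tensl_comp. rassoc. rewrite tensl_assoc_assoc_inv_assoc_inv. reflexivity.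
Qed.
Lemma mul_head_unitl {M W : Ob C} (x : Hom W _) : mul_head m M \o (ins_head η (tens H M) \o x) = x.
Proof.
  unfold mul_head, ins_head. rassoc. rewrite <- (tens_id H M), assoc_inv_natx, tensl_fuse.
  rewrite mul_unitl, tensl_lu_assoc_inv. cancel_isos. reflexivity.
Qed.
Lemma mul_head_unitr {M W : Ob C} (x : Hom W _) : mul_head m M \o (⟪ins_head η M⟫ \o x) = x.
Proof.
  unfold mul_head, ins_head. rewrite tensr_comp. rassoc.
  rewrite assoc_inv_natx, tensl_fuse, mul_unitr, triangle_invx. cancel_isos. reflexivity.
Qed.
Lemma comul_head_coassoc {M W : Ob C} (x : Hom W _) :
  ⟪comul_head Δ M⟫ \o (comul_head Δ M \o x)
  = comul_head Δ (tens H M) \o (comul_head Δ M \o x).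
Proof.
  symmetry. unfold comul_head. rewrite tensr_comp. rassoc.
  rewrite <- (tens_id H M), <- assoc_natx, tensl_fuse, comul_coassoc_inv, !tensl_comp. rassoc.
  rewrite assoc_assoc_tensl_inv, assoc_natx. reflexivity.
Qed.
Lemma comul_head_counitl {M W : Ob C} (x : Hom W _) :
  del_head ε (tens H M) \o (comul_head Δ M \o x) = x.
Proof.
  unfold del_head, comul_head. rassoc. rewrite <- (tens_id H M), <- assoc_natx, lu_tensx.
  rewrite !tensl_fuse, comul_counitl, tens_id, comp_idl. reflexivity.
Qed.
Lemma comul_head_counitr {M W : Ob C} (x : Hom W _) :
  ⟪del_head ε M⟫ \o (comul_head Δ M \o x) = x.
Proof.
  unfold del_head, comul_head. rewrite tensr_comp. rassoc. rewrite <- assoc_natx, trianglex.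
  rewrite !tensl_fuse, comul_counitr, tens_id, comp_idl. reflexivity.
Qed.

Lemma comul_mul_head {M W : Ob C} (x : Hom W _) :
  comul_head Δ M \o (mul_head m M \o x)
  = ⟪mul_head m M⟫ \o (mul_head m (tens H (tens H M)) \o (⟪swap_head (tens H M)⟫ \o
     (comul_head Δ (tens H (tens H M)) \o (⟪comul_head Δ M⟫ \o x)))).
Proof.
  unfold comul_head, mul_head, swap_head. rassoc.
  rewrite tensl_fuse, bialg_mul, !tensl_comp. rassoc.
  rewrite assoc_natx, assoc_middle_swap, assoc_natx. cancel_isos.
  rewrite !tensr_comp. rassoc.
  rewrite (tens_interchange Δ (assoc H H M)), (tens_fuse (idm H) Δ (tensm Δ (idm M)) (idm _)).
  rewrite comp_idr, comp_idl, <- (tens_interchange m (assoc_inv H H M)).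
  rewrite <- (tens_interchange m (tensm m (idm M))).
  rewrite (tens_fuse (idm (tens H H)) m (tensm m (idm M)) (idm _)).
  rewrite comp_idr, comp_idl, middle_swap_braid. rassoc. reflexivity.
Qed.
Lemma counit_mul_head {M W : Ob C} (x : Hom W _) :
  del_head ε M \o (mul_head m M \o x) = del_head ε M \o (del_head ε (tens H M) \o x).
Proof.
  unfold del_head, mul_head. rassoc. rewrite tensl_fuse, bialg_counit_mul, tensl_comp. rassoc.
  rewrite <- lu_natx, (tens_fuse ε (idm I) (idm _) (tensm ε (idm M))), comp_idr, comp_idl.
  rewrite <- assoc_inv_natx, tensl_lu_assoc_inv. reflexivity.
Qed.
Lemma antipode_head_l {M W : Ob C} (x : Hom W _) :
  mul_head m M \o (map_head S (tens H M) \o (comul_head Δ M \o x))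
  = ins_head η M \o (del_head ε M \o x).
Proof.
  unfold mul_head, map_head, comul_head, ins_head, del_head. rassoc.
  rewrite <- (tens_id H M), assoc_inv_natx. cancel_isos.
  rewrite !tensl_fuse, antipode_l. reflexivity.
Qed.
Lemma antipode_head_r {M W : Ob C} (x : Hom W _) :
  mul_head m M \o (⟪map_head S M⟫ \o (comul_head Δ M \o x))
  = ins_head η M \o (del_head ε M \o x).
Proof.
  unfold mul_head, map_head, comul_head, ins_head, del_head. rassoc.
  rewrite assoc_inv_natx. cancel_isos. rewrite !tensl_fuse, antipode_r. reflexivity.
Qed.

Definition comul_pair (M : Ob C) : Hom (tens H (tens H M)) (tens H (tens H (tens H (tens H M)))) :=
  ⟪swap_head (tens H M)⟫ \o (comul_head Δ (tens H (tens H M)) \o ⟪comul_head Δ M⟫).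

Lemma comul_pair_coassoc {M W : Ob C} (x : Hom W _) :
  comul_pair (tens H (tens H M)) \o (comul_pair M \o x)
  = ⟪⟪comul_pair M⟫⟫ \o (comul_pair M \o x).
Proof.
  unfold comul_pair. rewrite !tensr_comp. rassoc.
  tail_rewrite H 1 (comul_head_swap Δ (M:=tens H M) (idm _)).
  rewrite <- (comul_head_natx Δ (comul_head Δ (tens H M))).
  tail_rewrite_r H 1 (comul_head_coassoc (M:=M) (idm _)).
  rewrite (comul_head_natx Δ (⟪swap_head (tens H M)⟫)).
  rewrite (comul_head_natx Δ (swap_head (tens H (tens H M)))), <- comul_head_coassoc.
  tail_rewrite_r H 1 (swap_head_natx (comul_head Δ M) (idm _)).
  tail_rewrite H 1 (comul_tail_swap Δ (M:=tens H (tens H M)) (idm _)).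
  tail_rewrite H 1 (comul_head_natx Δ (⟪comul_head Δ M⟫) (idm _)).
  tail_rewrite_r H 1 (comul_head_natx Δ (⟪comul_head Δ M⟫) (idm _)).
  rewrite <- (comul_head_natx Δ (⟪comul_head Δ M⟫)).
  tail_rewrite H 1 (swap_head_natx (swap_head (tens H M)) (idm _)).
  reflexivity.
Qed.

(* Convolution of natural families H ⊗ H ⊗ M → H ⊗ M: [conv F G] is
   (h ⊗ k) ↦ F((h ⊗ k)₁) G((h ⊗ k)₂), [comul_pair] being the comultiplication of H ⊗ H. *)
Definition head_op : Type := forall M : Ob C, Hom (tens H (tens H M)) (tens H M).
Definition natural_head_op (F : head_op) : Prop :=
  forall (M M' : Ob C) (f : Hom M M') W (x : Hom W _),
    F M' \o (⟪⟪f⟫⟫ \o x) = ⟪f⟫ \o (F M \o x).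
Definition conv (F G : head_op) : head_op := fun M =>
  mul_head m M \o (⟪G M⟫ \o (F (tens H (tens H M)) \o comul_pair M)).
Definition conv_unit : head_op :=
  fun M => ins_head η M \o (del_head ε M \o del_head ε (tens H M)).

Lemma conv_ext (F F' G G' : head_op) M :
  (forall M, F M = F' M) -> (forall M, G M = G' M) -> conv F G M = conv F' G' M.
Proof. intros EF EG. unfold conv. rewrite EF, EG. reflexivity. Qed.

Lemma conv_assoc (F G K : head_op) (natF : natural_head_op F) M :
  conv (conv F G) K M = conv F (conv G K) M.
Proof.
  unfold conv. apply eq_at_idm. rassoc. rewrite !tensr_comp. rassoc.
  rewrite <- (natF _ _ (comul_pair M)), <- comul_pair_coassoc, <- mul_head_natx, <- mul_head_assoc.
  reflexivity.
Qed.
Lemma conv_unit_r (F : head_op) (natF : natural_head_op F) M : conv F conv_unit M = F M.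
Proof.
  unfold conv, conv_unit. apply eq_at_idm. rassoc. rewrite !tensr_comp. rassoc.
  rewrite mul_head_unitr, <- !natF. unfold comul_pair. rassoc.
  tail_rewrite H 1 (del_tail_swap ε (M:=tens H M) (idm _)).
  rewrite comul_head_counitr. tail_rewrite H 1 (comul_head_counitr (M:=M) (idm _)). reflexivity.
Qed.
Lemma conv_unit_l (K : head_op) M : conv conv_unit K M = K M.
Proof.
  unfold conv, conv_unit. apply eq_at_idm. rassoc.
  rewrite <- ins_head_natx, mul_head_unitl. unfold comul_pair. rassoc.
  rewrite del_head_natx, del_head_swap, comul_head_counitl.
  tail_rewrite H 1 (comul_head_counitl (M:=M) (idm _)). reflexivity.
Qed.

Definition antipode_of_mul : head_op := fun M => map_head S M \o mul_head m M.
Definition mul_op : head_op := fun M => mul_head m M.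
Definition mul_of_antipodes : head_op := fun M =>
  mul_head m M \o (⟪map_head S M⟫ \o (map_head S (tens H M) \o swap_head M)).

Lemma natural_antipode_of_mul : natural_head_op antipode_of_mul.
Proof.
  intros M M' f W x. unfold antipode_of_mul. rassoc.
  rewrite mul_head_natx, map_head_natx. reflexivity.
Qed.

Lemma conv_antipode_of_mul_mul M : conv antipode_of_mul mul_op M = conv_unit M.
Proof.
  unfold conv, antipode_of_mul, mul_op, conv_unit. apply eq_at_idm. rassoc.
  rewrite <- map_head_natx. unfold comul_pair. rassoc.
  rewrite <- comul_mul_head, antipode_head_l, counit_mul_head. reflexivity.
Qed.
Lemma conv_mul_mul_of_antipodes M : conv mul_op mul_of_antipodes M = conv_unit M.
Proof.
  unfold conv, mul_op, mul_of_antipodes, conv_unit. apply eq_at_idm. rassoc.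
  rewrite !tensr_comp. rassoc. repeat rewrite <- mul_head_natx. rewrite <- mul_head_assoc.
  tail_rewrite H 1 (mul_head_assoc (M:=M) (idm _)).
  unfold comul_pair. rassoc. rewrite comul_head_natx.
  tail_rewrite_r H 1 (comul_head_swap Δ (M:=M) (idm _)).
  tail_rewrite_r H 2 (map_head_natx S (map_head S M) (idm _)).
  tail_rewrite_r H 1 (comul_head_natx Δ (map_head S M) (idm _)).
  tail_rewrite H 1 (antipode_head_r (M:=tens H M) (idm _)).
  tail_rewrite H 1 (mul_head_unitl (M:=M) (idm _)).
  tail_rewrite H 1 (del_head_natx ε (map_head S M) (idm _)).
  tail_rewrite H 1 (del_head_swap ε (M:=M) (idm _)).
  rewrite <- comul_head_natx, antipode_head_r, (del_head_natx ε (del_head ε M)). reflexivity.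
Qed.

(* S ∘ m is a left and m ∘ (S ⊗ S) ∘ τ a right convolution inverse of m. *)
Lemma antipode_of_mul_eq M : antipode_of_mul M = mul_of_antipodes M.
Proof.
  rewrite <- (conv_unit_r _ natural_antipode_of_mul M).
  transitivity (conv antipode_of_mul (conv mul_op mul_of_antipodes) M).
  { apply conv_ext; intro; [reflexivity | symmetry; apply conv_mul_mul_of_antipodes]. }
  rewrite <- conv_assoc by apply natural_antipode_of_mul.
  transitivity (conv conv_unit mul_of_antipodes M).
  { apply conv_ext; intro; [apply conv_antipode_of_mul_mul | reflexivity]. }
  apply conv_unit_l.
Qed.

Lemma antipode_mul {M W : Ob C} (x : Hom W _) :
  map_head S M \o (mul_head m M \o x)
  = mul_head m M \o (⟪map_head S M⟫ \o (map_head S (tens H M) \o (swap_head M \o x))).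
Proof.
  pose proof (antipode_of_mul_eq M) as E. unfold antipode_of_mul, mul_of_antipodes in E.
  rewrite comp_assoc, E. rassoc. reflexivity.
Qed.

Section Pivot.
Variable p : Hom I H.
Hypothesis piv : is_pivotal hs p.
Local Notation T := (Tmap hs p).

Lemma map_head_T M : map_head T M = mul_head m M \o (ins_head p (tens H M) \o map_head S M).
Proof.
  unfold Tmap, map_head, mul_head, ins_head. apply eq_at_idm. rassoc. rewrite !tensl_comp. rassoc.
  rewrite (lu_inv_natx (tensm S (idm M))), tens_merge, assoc_inv_natx, assoc_inv_lu_inv.
  reflexivity.
Qed.

Lemma comul_ins_pivot {M W : Ob C} (x : Hom W _) :
  comul_head Δ M \o (ins_head p M \o x) = ins_head p (tens H M) \o (ins_head p M \o x).
Proof.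
  destruct piv as [grouplike _].
  unfold comul_head, ins_head. rassoc. rewrite tensl_fuse, grouplike, tensl_comp. rassoc.
  rewrite assoc_natx, assoc_tensl_lu_inv, (lu_inv_natx (tensm p (idm M))), tens_merge.
  reflexivity.
Qed.

Lemma pivotal_identity :
  m \o tensm m (idm H) \o tensm (idm (tens H H)) S \o tensm (idm (tens H H)) p
    \o ru_inv (tens H H) \o tensm p (idm H) \o lu_inv H \o S \o S = idm H.
Proof.
  destruct piv as [_ [_ pivotal]]. etransitivity; [| exact pivotal].
  apply eq_at_idm. rassoc. do 4 rewrite ru_inv_natx.
  rewrite (tens_split (⟪S \o S⟫) S), (tens_split (tensm p (idm H)) p). rassoc.
  repeat (rewrite <- (tens_interchange _ S) || rewrite <- (tens_interchange _ p)).
  rewrite !tensl_fuse. rassoc.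
  replace (⟪S \o S⟫ \o (tensm p (idm H) \o lu_inv H))
    with (tensm p (idm H) \o (lu_inv H \o (S \o S))).
  { reflexivity. }
  apply eq_at_idm. rassoc. rewrite <- tens_interchange, !lu_inv_natx, tensr_comp. rassoc.
  reflexivity.
Qed.

Lemma pivotal_head {M W : Ob C} (x : Hom W _) :
  mul_head m M \o (⟪map_head S M⟫ \o (⟪ins_head p M⟫ \o (mul_head m M
    \o (ins_head p (tens H M) \o (map_head S M \o (map_head S M \o x)))))) = x.
Proof.
  unfold mul_head, map_head, ins_head. rewrite !tensr_comp. rassoc.
  rewrite <- (tens_interchange m (lu_inv M)), <- (tens_interchange m (tensm p (idm M))).
  rewrite <- (tens_interchange m (tensm S (idm M))), <- (tens_id H M).
  rewrite (assoc_inv_natx m), (assoc_inv_natx (idm _) S), (assoc_inv_natx (idm _) p).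
  rewrite triangle_invx, (assoc_inv_natx p), assoc_inv_lu_inv, !tensl_fuse.
  rewrite pivotal_identity, tens_id, comp_idl. reflexivity.
Qed.

Lemma map_head_TK {M W : Ob C} (x : Hom W _) : map_head T M \o (map_head T M \o x) = x.
Proof.
  rewrite !map_head_T. rassoc. rewrite antipode_mul, swap_ins_head, map_head_natx.
  rewrite ins_head_natx, mul_head_assoc, ins_head_natx, mul_head_natx, ins_head_natx, mul_head_natx.
  apply pivotal_head.
Qed.

Lemma T_mul {M W : Ob C} (x : Hom W _) :
  map_head T M \o (mul_head m M \o x)
  = mul_head m M \o (⟪map_head S M⟫ \o (map_head T (tens H M) \o (swap_head M \o x))).
Proof.
  rewrite !map_head_T. rassoc.
  rewrite antipode_mul, ins_head_natx, mul_head_assoc, ins_head_natx, mul_head_natx. reflexivity.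
Qed.

Lemma T_mul_T {M W : Ob C} (x : Hom W _) :
  map_head T M \o (mul_head m M \o (⟪map_head T M⟫ \o x))
  = mul_head m M \o (⟪map_head S M⟫ \o (swap_head M \o x)).
Proof. rewrite T_mul, swap_map_second, map_head_TK. reflexivity. Qed.

End Pivot.

End Hopf.
End Tail.
End Coherence.

Definition op_cat (C : SymMonCat) : SymMonCat.
Proof.
  refine (@Build_SymMonCat (Ob C) (fun A B => Hom B A) (fun A => idm A)
    (fun A B D g f => comp f g) (@tens C) (fun A B D E f g => tensm f g) (@unitob C)
    (fun A B D => assoc_inv A B D) (fun A B D => assoc A B D)
    (fun A => lu_inv A) (fun A => lu A) (fun A => ru_inv A) (fun A => ru A)
    (fun A B => sym B A) _ _ _ _ _ _ _ _ _ _ _ _ _ _ _ _ _ _ _); cbn; intros.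
  - apply comp_idr.
  - apply comp_idl.
  - symmetry. apply comp_assoc.
  - apply tens_id.
  - apply tens_comp.
  - symmetry. apply assoc_inv_nat.
  - apply assoc_iso1.
  - apply assoc_iso2.
  - symmetry. apply lu_inv_nat.
  - apply lu_iso1.
  - apply lu_iso2.
  - symmetry. apply ru_inv_nat.
  - apply ru_iso1.
  - apply ru_iso2.
  - symmetry. apply sym_nat.
  - apply sym_inv.
  - apply pentagon_inv.
  - apply triangle_inv.
  - apply hexagon_inv.
Defined.

Lemma middle_swap_op {C : SymMonCat} (A B D E : Ob C) :
  @middle_swap (op_cat C) A B D E = middle_swap A D B E.
Proof. unfold middle_swap. cbn. rewrite !comp_assoc. reflexivity. Qed.

Definition op_hopf {C : SymMonCat} {H : Ob C} (hs : HopfMonoid H) : @HopfMonoid (op_cat C) H.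
Proof.
  refine (@Build_HopfMonoid (op_cat C) H (comul hs) (counit hs) (mul hs) (unt hs) (antipode hs)
    _ _ _ _ _ _ _ _ _ _ _ _); try rewrite middle_swap_op; cbn.
  - apply comul_coassoc_inv.
  - apply comul_counitl_inv.
  - apply comul_counitr_inv.
  - apply mul_assoc_inv.
  - rewrite comp_assoc, mul_unitl, lu_iso2. reflexivity.
  - rewrite comp_assoc, mul_unitr, ru_iso2. reflexivity.
  - rewrite bialg_mul, comp_assoc. reflexivity.
  - apply bialg_comul_unit.
  - apply bialg_counit_mul.
  - apply bialg_counit_unit.
  - rewrite comp_assoc. apply antipode_l.
  - rewrite comp_assoc. apply antipode_r.
Defined.

(* Δ(S a) = S(a₂) ⊗ S(a₁), read off from [antipode_mul] in the opposite category. *)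
Lemma antipode_comul {C : SymMonCat} {H : Ob C} (hs : HopfMonoid H) {M W : Ob C}
    (x : Hom W _) :
  comul_head (comul hs) M \o (map_head (antipode hs) M \o x)
  = swap_head M \o (map_head (antipode hs) (tens H M)
      \o (tensm (idm H) (map_head (antipode hs) M) \o (comul_head (comul hs) M \o x))).
Proof.
  pose proof (antipode_mul (op_hopf hs) (M:=M) (idm _)) as E.
  unfold mul_head, map_head, swap_head, braid in E. cbn in E.
  unfold mul_head, map_head, swap_head, braid, comul_head. rewrite !comp_idl in E.
  rewrite <- !comp_assoc in E. rewrite !comp_assoc in E.
  rewrite <- !comp_assoc. rewrite !comp_assoc. rewrite E. reflexivity.
Qed.

Section HopfModules.
Context {C : SymMonCat} {H : Ob C} (hs : HopfMonoid H).
Local Notation "⟪ f ⟫" := (tensm (idm H) f).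
Local Notation m := (mul hs).
Local Notation η := (unt hs).
Local Notation Δ := (comul hs).
Local Notation ε := (counit hs).
Local Notation Sa := (antipode hs).

Definition is_hopf_modulex (Mod : Ob C) (act : Hom (tens H Mod) Mod) (coact : Hom Mod (tens H Mod))
  : Prop :=
  (forall W (x : Hom W _), act \o (mul_head m Mod \o x) = act \o (⟪act⟫ \o x)) /\
  (forall W (x : Hom W _), act \o (ins_head η Mod \o x) = x) /\
  (forall W (x : Hom W _), comul_head Δ Mod \o (coact \o x) = ⟪coact⟫ \o (coact \o x)) /\
  (forall W (x : Hom W _), del_head ε Mod \o (coact \o x) = x) /\
  (forall W (x : Hom W _), coact \o (act \o x) = ⟪act⟫ \o (mul_head m (tens H Mod)
     \o (⟪swap_head Mod⟫ \o (comul_head Δ (tens H Mod) \o (⟪coact⟫ \o x))))).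

Lemma is_hopf_module_of_x (Mod : Ob C) act coact :
  is_hopf_modulex Mod act coact -> is_hopf_module hs act coact.
Proof.
  intros [act_assoc [act_unit [coact_coassoc [coact_counit compat]]]].
  split; [|split; [|split; [|split]]].
  - pose proof (act_assoc _ (assoc H H Mod)) as E. unfold mul_head in E. rassoc.
    rewrite <- !comp_assoc, assoc_iso1, comp_idr in E. rewrite E. reflexivity.
  - pose proof (act_unit _ (lu Mod)) as E. unfold ins_head in E.
    rewrite <- !comp_assoc, lu_iso1, comp_idr in E. exact E.
  - apply (split_mono_cancel _ _ (assoc H H Mod) (assoc_inv H H Mod) (assoc_iso1 _ _ _)).
    pose proof (coact_coassoc _ (idm _)) as E. unfold comul_head in E. rewrite !comp_idr in E.
    rassoc. rewrite assoc_invK. rewrite <- comp_assoc in E. exact E.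
  - apply (split_mono_cancel _ _ (lu Mod) (lu_inv Mod) (lu_iso1 _)).
    pose proof (coact_counit _ (idm _)) as E. unfold del_head in E. rewrite !comp_idr in E.
    rewrite lu_iso2. rewrite <- comp_assoc in E. exact E.
  - pose proof (compat _ (idm _)) as E. rewrite !comp_idr in E. rewrite E.
    rewrite middle_swap_braid. unfold mul_head, swap_head, comul_head.
    rewrite (tens_split Δ coact), <- (comp_idl m), <- (comp_idr act).
    rewrite tens_comp, comp_idl, comp_idr.
    apply eq_at_idm. rassoc. reflexivity.
Qed.
Lemma hopf_modulex_regular (N : Ob C) : is_hopf_modulex (tens H N) (mul_head m N) (comul_head Δ N).
Proof.
  split; [|split; [|split; [|split]]]; intros.
  - symmetry. apply mul_head_assoc.
  - apply mul_head_unitl.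
  - symmetry. apply comul_head_coassoc.
  - apply comul_head_counitl.
  - rewrite comul_mul_head, comul_head_natx. reflexivity.
Qed.

Lemma hopf_modulex_conj (Mod : Ob C) act coact (phi : Hom Mod Mod)
    (phiK : forall W (x : Hom W Mod), phi \o (phi \o x) = x) :
  is_hopf_modulex Mod act coact ->
  is_hopf_modulex Mod (phi \o (act \o ⟪phi⟫)) (⟪phi⟫ \o (coact \o phi)).
Proof.
  intros [act_assoc [act_unit [coact_coassoc [coact_counit compat]]]].
  split; [|split; [|split; [|split]]]; intros; rassoc.
  - rewrite !tensr_comp. rassoc. tail_rewrite H 1 (phiK _ (idm _)).
    rewrite <- mul_head_natx, act_assoc. reflexivity.
  - rewrite <- ins_head_natx, act_unit. apply phiK.
  - rewrite !tensr_comp. rassoc. tail_rewrite H 1 (phiK _ (idm _)).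
    rewrite comul_head_natx, coact_coassoc. reflexivity.
  - rewrite del_head_natx, coact_counit. apply phiK.
  - rewrite phiK, compat, !tensr_comp. rassoc.
    rewrite (comul_head_natx Δ (⟪phi⟫)). tail_rewrite H 1 (swap_head_natx (H:=H) phi (idm _)).
    rewrite (mul_head_natx m (⟪phi⟫)). tail_rewrite H 2 (phiK _ (idm _)). reflexivity.
Qed.

Lemma hopf_modulex_tail (Mod : Ob C) act coact :
  is_hopf_modulex Mod act coact ->
  is_hopf_modulex (tens H Mod) (⟪act⟫ \o swap_head Mod) (swap_head Mod \o ⟪coact⟫).
Proof.
  intros [act_assoc [act_unit [coact_coassoc [coact_counit compat]]]].
  split; [|split; [|split; [|split]]]; intros; rassoc.
  - rewrite swap_mul_head. tail_rewrite H 1 (act_assoc _ (idm _)).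
    rewrite !tensr_comp. rassoc. rewrite swap_head_natx. reflexivity.
  - rewrite swap_ins_head. tail_rewrite H 1 (act_unit _ (idm _)). reflexivity.
  - rewrite comul_head_swap. tail_rewrite H 1 (coact_coassoc _ (idm _)).
    rewrite !tensr_comp. rassoc. rewrite swap_head_natx. reflexivity.
  - rewrite del_head_swap. tail_rewrite H 1 (coact_counit _ (idm _)). reflexivity.
  - tail_rewrite H 1 (compat _ (idm _)). rewrite !tensr_comp. rassoc.
    rewrite (swap_head_natx (H:=H) act), swap_mul_tail, (swap_head_natx (H:=H) (swap_head Mod)).
    rewrite swap_comul_tail, (swap_head_natx (H:=H) coact), swap_headK.
    rewrite <- (mul_head_natx m (swap_head Mod)), (comul_head_natx Δ (swap_head Mod)).
    tail_rewrite H 1 (swap_head_yang_baxter (H:=H) (M:=Mod) (idm _)). reflexivity.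
Qed.

Definition actions_commute (Mod : Ob C) (act1 act2 : Hom (tens H Mod) Mod) : Prop :=
  forall W (x : Hom W _), act1 \o (⟪act2⟫ \o x) = act2 \o (⟪act1⟫ \o (swap_head Mod \o x)).
Definition coactions_commute (Mod : Ob C) (coact1 coact2 : Hom Mod (tens H Mod)) : Prop :=
  forall W (x : Hom W _),
    ⟪coact1⟫ \o (coact2 \o x) = swap_head Mod \o (⟪coact2⟫ \o (coact1 \o x)).

Lemma actions_commute_tail (Mod : Ob C) act1 act2 :
  actions_commute Mod act1 act2 ->
  actions_commute (tens H Mod) (⟪act1⟫ \o swap_head Mod) (⟪act2⟫ \o swap_head Mod).
Proof.
  intros comm W x. rewrite !tensr_comp. rassoc. rewrite !swap_head_natx.
  tail_rewrite H 1 (comm _ (idm _)). rewrite ?tensr_comp. rassoc. rewrite ?swap_head_yang_baxter.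
  reflexivity.
Qed.
Lemma coactions_commute_tail (Mod : Ob C) coact1 coact2 :
  coactions_commute Mod coact1 coact2 ->
  coactions_commute (tens H Mod) (swap_head Mod \o ⟪coact1⟫) (swap_head Mod \o ⟪coact2⟫).
Proof.
  intros comm W x. rewrite !tensr_comp. rassoc. rewrite <- !swap_head_natx.
  tail_rewrite H 1 (comm _ (idm _)). rewrite ?tensr_comp. rassoc. rewrite ?swap_head_yang_baxter.
  reflexivity.
Qed.

Lemma act_at_head g n : act_at hs g (S n) 0 = mul_head g (Hpow n).
Proof. reflexivity. Qed.
Lemma act_at_tail g n k : act_at hs g (S n) (S k) = ⟪act_at hs g n k⟫ \o swap_head (Hpow n).
Proof. cbn [act_at]. unfold swap_head, braid. rewrite !comp_assoc. reflexivity. Qed.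
Lemma coact_at_head c n : coact_at hs c (S n) 0 = comul_head c (Hpow n).
Proof. reflexivity. Qed.
Lemma coact_at_tail c n k :
  coact_at hs c (S n) (S k) = swap_head (Hpow n) \o ⟪coact_at hs c n k⟫.
Proof. cbn [coact_at]. unfold swap_head, braid. rewrite !comp_assoc. reflexivity. Qed.

Section Edges.
Variable p : Hom unitob H.
Hypothesis piv : is_pivotal hs p.
Local Notation T := (Tmap hs p).

Lemma comul_T {M W : Ob C} (x : Hom W _) :
  comul_head Δ M \o (map_head T M \o x)
  = swap_head M \o (⟪map_head T M⟫ \o (map_head T (tens H M) \o (comul_head Δ M \o x))).
Proof.
  rewrite swap_map_second, swap_map_first, !map_head_T, !tensr_comp. rassoc.
  rewrite comul_mul_head, <- ins_head_natx, (comul_ins_pivot _ _ piv), antipode_comul.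
  rewrite <- swap_map_first, (map_head_natx Sa (mul_head m M)).
  rewrite (map_head_natx Sa (ins_head p (tens H M))).
  rewrite <- swap_map_second, (ins_head_natx p (⟪mul_head m M⟫)).
  rewrite (mul_head_natx m (mul_head m M)).
  rewrite <- (ins_head_natx p (swap_head (H:=H) (tens H M))), swap_ins_head.
  rewrite (map_head_natx Sa (map_head Sa M)).
  reflexivity.
Qed.

Lemma actions_commute_head (N : Ob C) :
  actions_commute (tens H N) (map_head T N \o (mul_head m N \o ⟪map_head T N⟫)) (mul_head m N).
Proof.
  intros W x. rassoc.
  rewrite (T_mul_T _ _ piv), swap_mul_tail, <- (mul_head_natx m (map_head Sa N)).
  rewrite <- mul_head_assoc, !tensr_comp. rassoc. tail_rewrite H 1 (T_mul_T _ _ piv (M:=N) (idm _)).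
  reflexivity.
Qed.

Lemma coactions_commute_head (N : Ob C) :
  coactions_commute (tens H N)
    (⟪map_head T N⟫ \o (comul_head Δ N \o map_head T N)) (comul_head Δ N).
Proof.
  intros W x. rewrite !tensr_comp. rassoc.
  tail_rewrite H 1 (comul_T (M:=N) (idm _)).
  tail_rewrite_r H 1 (swap_map_first T (H:=H) (M:=N) (idm _)).
  tail_rewrite H 1 (map_head_natx T (map_head T N) (idm _)).
  tail_rewrite H 1 (map_head_TK _ _ piv (M:=tens H N) (idm _)).
  rewrite comul_T, <- swap_map_first, (map_head_natx T (map_head T N)), (map_head_TK _ _ piv).
  rewrite comul_tail_swap, swap_headK, comul_head_natx, comul_head_coassoc. reflexivity.
Qed.

Lemma edge_hopf_modules n k : k < n ->
  is_hopf_modulex (Hpow n) (act_plus hs n k) (coact_plus hs n k) /\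
  is_hopf_modulex (Hpow n) (act_minus hs p n k) (coact_minus hs p n k) /\
  actions_commute (Hpow n) (act_minus hs p n k) (act_plus hs n k) /\
  coactions_commute (Hpow n) (coact_minus hs p n k) (coact_plus hs n k).
Proof.
  revert k. induction n as [|n IH]; intros k lt; [lia|].
  unfold act_plus, act_minus, coact_plus, coact_minus in *.
  destruct k as [|k].
  - rewrite !act_at_head, !coact_at_head, mul_head_conj, comul_head_conj.
    split; [|split; [|split]].
    + apply hopf_modulex_regular.
    + apply (hopf_modulex_conj _ _ _ _ (fun _ x => map_head_TK _ _ piv x)), hopf_modulex_regular.
    + apply actions_commute_head.
    + apply coactions_commute_head.
  - rewrite !act_at_tail, !coact_at_tail.
    destruct (IH k ltac:(lia)) as [plus [minus [acts coacts]]].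
    split; [|split; [|split]].
    + apply hopf_modulex_tail, plus.
    + apply hopf_modulex_tail, minus.
    + apply actions_commute_tail, acts.
    + apply coactions_commute_tail, coacts.
Qed.

End Edges.

End HopfModules.

Theorem lemma5p2 (C : SymMonCat) (H : Ob C) (hs : HopfMonoid H)
    (p : Hom unitob H) (n k : nat) :
  is_pivotal hs p -> k < n ->
  (is_hopf_module hs (act_plus hs n k) (coact_plus hs n k) /\
   is_hopf_module hs (act_minus hs p n k) (coact_minus hs p n k)) /\
  (comp (act_minus hs p n k) (tensm (idm H) (act_plus hs n k))
   = comp (act_plus hs n k)
       (comp (tensm (idm H) (act_minus hs p n k))
          (comp (assoc H H (Hpow n))
             (comp (tensm (sym H H) (idm (Hpow n))) (assoc_inv H H (Hpow n)))))) /\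
  (comp (tensm (idm H) (coact_minus hs p n k)) (coact_plus hs n k)
   = comp (assoc H H (Hpow n))
       (comp (tensm (sym H H) (idm (Hpow n)))
          (comp (assoc_inv H H (Hpow n))
             (comp (tensm (idm H) (coact_plus hs n k)) (coact_minus hs p n k))))).
Proof.
  intros piv lt.
  destruct (edge_hopf_modules hs p piv n k lt) as [plus [minus [acts coacts]]].
  split; [split; apply is_hopf_module_of_x; assumption | split].
  - pose proof (acts _ (idm _)) as E. rewrite !comp_idr in E. exact E.
  - pose proof (coacts _ (idm _)) as E. unfold swap_head, braid in E.
    rewrite !comp_idr, <- !comp_assoc in E. exact E.
Qed.
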